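(* Let $\lambda=(\lambda_1,\dots,\lambda_l)$ and $\mu=(\mu_1,\dots,\mu_m)$ be decompositions of $n$ with $\lambda_l=1$ and $\mu_m\ge 2$, and let $\mu'=(\mu_1,\dots,\mu_{m-1},\mu_m-1,1)$. Then the index of $P_{\lambda|\mu'}$ in $P_{\lambda|\mu}$ is $2^{\mu_m-1}$.
   Context: A decomposition of $N$ is a finite sequence of positive integers with sum $N$. For a decomposition $\lambda=(\lambda_1,\dots,\lambda_l)$ of $N$, $P_\lambda\le\mathrm{GL}_N(\mathbb{F}_2)$ is the standard parabolic subgroup of invertible block upper triangular matrices with diagonal blocks of sizes $\lambda_1,\dots,\lambda_l$ in this order. $P_\mu^t$ is the group of transposes of elements of $P_\mu$, and $P_{\lambda|\mu}=P_\lambda\cap P_\mu^t$. *)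

From mathcomp Require Import all_boot all_order all_algebra all_fingroup.
Set Implicit Arguments. Unset Strict Implicit. Unset Printing Implicit Defensive.
Local Open Scope ring_scope.

Definition decomposition (s : seq nat) (n : nat) : bool :=
  all (fun x => 0 < x)%N s && (sumn s == n).

(* Block index (0-based) of the 0-based row/column index i for the
   decomposition s: the number of partial sums s_1+...+s_k (k >= 1) that are <= i. *)
Definition blk (s : seq nat) (i : nat) : nat :=
  count (fun p => p <= i)%N [seq sumn (take k.+1 s) | k <- iota 0 (size s)].

Definition block_upper (m : nat) (s : seq nat) (A : 'M['F_2]_m) : bool :=
  [forall i : 'I_m, forall j : 'I_m, (blk s j < blk s i)%N ==> (A i j == 0)].

Definition parabolic (n : nat) (s : seq nat) : {set {'GL_n['F_2]}} :=
  [set g : {'GL_n['F_2]} | block_upper s (GLval g)].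

Definition parabolic_t (n : nat) (s : seq nat) : {set {'GL_n['F_2]}} :=
  [set g : {'GL_n['F_2]} | block_upper s (GLval g)^T].

Definition Pbar (n : nat) (lam mu : seq nat) : {set {'GL_n['F_2]}} :=
  parabolic n lam :&: parabolic_t n mu.

From mathcomp Require Import all_boot all_order all_algebra all_fingroup.
From mathcomp Require Import zify.
Set Implicit Arguments. Unset Strict Implicit. Unset Printing Implicit Defensive.
Import GRing.Theory.
Local Open Scope ring_scope.

(* Let P = P_{lam|mu} act on column vectors of F_2^n by g.v = g^-1 v.  Since the
   last block of lam is a singleton, every g in P has last row e_n^T; the extra
   conditions of P_{lam|mu'} say exactly that the last column of g is e_n, so
   P_{lam|mu'} is the stabiliser of e_n.  The orbit of e_n consists of the last
   columns of elements of P: the vectors with last coordinate 1, arbitrary on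
   the other mu_m - 1 rows of the last mu-block, and 0 elsewhere; each of them
   is reached by a transvection 1 + (v - e_n) e_n^T, which lies in P.  Hence
   |P : P_{lam|mu'}| = 2^(mu_m - 1) by orbit-stabiliser. *)

Lemma ltn_ord_max n (i : 'I_n.+1) : (i < n)%N = (i != ord_max).
Proof. by rewrite ltn_neqAle -ltnS ltn_ord andbT. Qed.

Lemma blk_rcons t x i : blk (rcons t x) i = (blk t i + (sumn t + x <= i))%N.
Proof.
rewrite /blk size_rcons -addn1 iotaD map_cat count_cat /= add0n addn0.
congr (_ + _)%N; last by rewrite take_oversize ?size_rcons // sumn_rcons.
congr count; apply/eq_in_map => k; rewrite mem_iota add0n => /andP[_ ltkt].
rewrite -cats1 take_cat; case: ltnP => // letk.
have -> : k.+1 = size t by lia.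
by rewrite subnn take0 cats0 take_size.
Qed.

Lemma blk_rcons_lt t x i : (i < sumn t + x)%N -> blk (rcons t x) i = blk t i.
Proof. by rewrite blk_rcons ltnNge => /negbTE ->; rewrite addn0. Qed.

Lemma blk_le_size t i : (blk t i <= size t)%N.
Proof. by rewrite /blk (leq_trans (count_size _ _)) // size_map size_iota. Qed.

Lemma blk_ge t i : (sumn t <= i)%N -> blk t i = size t.
Proof.
move=> leti; apply/eqP; rewrite -[X in _ == X](size_iota 0).
rewrite -(size_map (fun k => sumn (take k.+1 t))) -all_count.
apply/allP => _ /mapP[k _ ->]; apply: leq_trans leti.
by rewrite -[in leqRHS](cat_take_drop k.+1 t) sumn_cat leq_addr.
Qed.

Lemma blk_lt_size t i : (blk t i < size t)%N = (i < sumn t)%N.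
Proof.
case: (ltnP i (sumn t)) => [|leti]; last by rewrite blk_ge ?ltnn.
case/lastP: t => [//|t x]; rewrite sumn_rcons size_rcons => /blk_rcons_lt ->.
by rewrite ltnS blk_le_size.
Qed.

Lemma block_upper1 m s : block_upper s (1%:M : 'M['F_2]_m).
Proof.
apply/forallP => i; apply/forallP => j; apply/implyP => ltji.
by rewrite mxE; case: (i =P j) ltji => [->|_]; rewrite ?ltnn.
Qed.

Lemma block_upperM m s (A B : 'M['F_2]_m) :
  block_upper s A -> block_upper s B -> block_upper s (A *m B).
Proof.
move=> /'forall_forallP A_up /'forall_forallP B_up.
apply/'forall_forallP => i j; apply/implyP => ltji; rewrite mxE big1 // => k _.
case: (ltnP (blk s k) (blk s i)) => [ltki|leik].
  by rewrite (eqP (implyP (A_up i k) ltki)) mul0r.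
by rewrite (eqP (implyP (B_up k j) (leq_trans ltji leik))) mulr0.
Qed.

Lemma group_set_Pbar n lam mu : group_set (Pbar n lam mu).
Proof.
apply/group_setP; split; first by rewrite !inE GL_1E trmx1 !block_upper1.
move=> x y /setIP[]; rewrite !inE => x_lam x_mu /andP[y_lam y_mu].
by rewrite GL_MxE trmx_mul !block_upperM.
Qed.

Canonical Pbar_group n lam mu := group (group_set_Pbar n lam mu).

Lemma PbarP n (lam mu : seq nat) (g : {'GL_n['F_2]}) :
  reflect ((forall i j : 'I_n.-1.+1, (blk lam j < blk lam i)%N -> GLval g i j = 0) /\
           (forall i j : 'I_n.-1.+1, (blk mu j < blk mu i)%N -> GLval g j i = 0))
          (g \in Pbar n lam mu).
Proof.
rewrite !inE; apply: (iffP andP) => [[]|[g_lam g_mu]].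
  move=> /'forall_forallP g_lam /'forall_forallP g_mu.
  split=> i j ltji; first exact/eqP/(implyP (g_lam i j)).
  by have /implyP/(_ ltji)/eqP := g_mu i j; rewrite mxE.
split; apply/'forall_forallP => i j; apply/implyP => ltji; rewrite ?mxE.
  by rewrite g_lam.
by rewrite g_mu.
Qed.

Lemma F2_cases (x : 'F_2) : x = 0 \/ x = 1.
Proof. by case: x => [[|[|m]]] // lt_m2; [left|right]; apply: val_inj. Qed.

Lemma F2mx_addxx m n (A : 'M['F_2]_(m, n)) : A + A = 0.
Proof. by apply/matrixP => i j; rewrite !mxE GRing.addrr_pchar2 ?pchar_Fp. Qed.

Lemma transvectionE (R : pzRingType) m (W : 'cV[R]_m) (f : 'I_m) i j :
  (1%:M + W *m (delta_mx f 0)^T) i j = (i == j)%:R + (j == f)%:R * W i 0.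
Proof. by rewrite !mxE big_ord1 !mxE andbT mulr_natr mulr_natl. Qed.

Lemma transvection_unit m (W : 'cV['F_2]_m) (f : 'I_m) :
  W f 0 = 0 -> 1%:M + W *m (delta_mx f 0)^T \in unitmx.
Proof.
move=> W_f; set u := 1%:M + _.
have fW : (delta_mx f (0 : 'I_1))^T *m W = 0.
  by apply/rowP => j; rewrite ord1 trmx_delta -rowE !mxE W_f.
have uu : u *m u = 1%:M.
  rewrite mulmxDl mul1mx mulmxDr mulmx1 -!mulmxA (mulmxA _ W) fW.
  by rewrite mul0mx mulmx0 addr0 -addrA F2mx_addxx addr0.
by case: (mulmx1_unit uu).
Qed.

Section LastRow.
Variables (n' : nat) (tl mu : seq nat) (g : {'GL_n'.+1['F_2]}).
Hypotheses (tl_n' : sumn tl = n') (g_P : g \in Pbar n'.+1 (rcons tl 1%N) mu).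

Lemma Pbar_last_row j : j != ord_max -> GLval g ord_max j = 0.
Proof.
move=> j_max; case/PbarP: g_P => g_lam _; apply: g_lam.
have lt_n'1 (i : 'I_n'.+1) : (i < sumn tl + 1)%N by rewrite tl_n' addn1.
rewrite !blk_rcons_lt // (@blk_ge tl ord_max) ?tl_n' //.
by rewrite blk_lt_size tl_n' ltn_ord_max.
Qed.

Lemma Pbar_last_diag : GLval g ord_max ord_max = 1.
Proof.
case: (F2_cases (GLval g ord_max ord_max)) => // g_nn.
have row_g0 : row ord_max (GLval g) = 0.
  apply/rowP => j; rewrite !mxE.
  by case: (eqVneq j ord_max) => [->|/Pbar_last_row].
have := congr1 (mulmx^~ (invmx (GLval g))) row_g0.
rewrite -row_mul mulmxV ?GL_unitmx // mul0mx => /rowP/(_ ord_max).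
by rewrite !mxE eqxx.
Qed.

End LastRow.

Section ColumnAction.
Variables (R : finComUnitRingType) (n' : nat).

Definition GLcol_act (v : 'cV[R]_n'.+1) (g : {'GL_n'.+1[R]}) : 'cV_n'.+1 :=
  GLval (g^-1)%g *m v.

Lemma GLcol_act1 : GLcol_act^~ 1%g =1 id.
Proof. by move=> v; rewrite /GLcol_act invg1 GL_1E mul1mx. Qed.

Lemma GLcol_actM v : act_morph GLcol_act v.
Proof. by move=> a b; rewrite /GLcol_act invMg GL_MxE mulmxA. Qed.

Canonical GLcol_action := TotalAction GLcol_act1 GLcol_actM.

End ColumnAction.

Section SplitLastBlock.
Variables (n' k' : nat) (tl tm : seq nat).
Hypotheses (tl_n' : sumn tl = n') (tm_n' : (sumn tm + k'.+2 = n'.+1)%N).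
Let lam := rcons tl 1%N.
Let mu := rcons tm k'.+2.
Let mu' := rcons (rcons tm k'.+1) 1%N.
Let en : 'cV['F_2]_n'.+1 := delta_mx ord_max 0.

Lemma blk_lam (i : 'I_n'.+1) : blk lam i = blk tl i.
Proof. by rewrite blk_rcons_lt // tl_n' addn1. Qed.

Lemma blk_mu (i : 'I_n'.+1) : blk mu i = blk tm i.
Proof. by rewrite blk_rcons_lt // tm_n'. Qed.

Lemma blk_tm_max : blk tm (@ord_max n') = size tm.
Proof. by apply: blk_ge => /=; lia. Qed.

Lemma blk_mu' (i : 'I_n'.+1) : blk mu' i = (blk tm i + (i == ord_max))%N.
Proof.
rewrite blk_rcons_lt ?sumn_rcons; last by have := ltn_ord i; lia.
rewrite blk_rcons; congr (_ + nat_of_bool _)%N.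
case: eqVneq => [->|i_max] /=; first by apply/idP; lia.
by apply/negbTE; rewrite -ltnNge; move: i_max; rewrite -ltn_ord_max; lia.
Qed.

Lemma Pbar_mu'E g :
  (g \in Pbar n'.+1 lam mu') = (g \in Pbar n'.+1 lam mu) && (GLval g *m en == en).
Proof.
apply/idP/andP => [/PbarP[g_lam g_mu']|[/PbarP[g_lam g_mu] /eqP g_en]].
  have g_P : g \in Pbar n'.+1 lam mu.
    apply/PbarP; split=> // i j; rewrite !blk_mu => lt_ji; apply: g_mu'.
    have j_max : j != ord_max.
      by apply: contraTneq lt_ji => ->; rewrite blk_tm_max -leqNgt blk_le_size.
    by rewrite !blk_mu' (negbTE j_max) addn0 (leq_trans lt_ji (leq_addr _ _)).
  split=> //; apply/eqP/colP => r; rewrite -colE !mxE andbT.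
  have [->|r_max] := eqVneq r ord_max; first exact: Pbar_last_diag g_P.
  apply: g_mu'; rewrite !blk_mu' (negbTE r_max) eqxx addn0 blk_tm_max addn1.
  by rewrite ltnS blk_le_size.
have g_col r : GLval g r ord_max = (r == ord_max)%:R.
  by have /colP/(_ r) := g_en; rewrite -colE !mxE andbT.
apply/PbarP; split=> // i j; rewrite !blk_mu'.
have [->|i_max] := eqVneq i ord_max.
  by have [->|j_max] := eqVneq j ord_max; rewrite ?ltnn // g_col (negbTE j_max).
rewrite addn0 => lt_ji; apply: g_mu; rewrite !blk_mu.
exact: leq_ltn_trans (leq_addr _ _) lt_ji.
Qed.

Lemma Pbar_mu'_stab :
  Pbar n'.+1 lam mu' = ('C_(Pbar n'.+1 lam mu)[en | GLcol_action _ _])%g.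
Proof.
apply/setP => g; rewrite Pbar_mu'E in_setI; congr (_ && _).
apply/eqP/astab1P => /= [g_en|]; rewrite /GLcol_act GL_VxE.
  by rewrite -{1}g_en (mulKmx (GL_unitmx g)).
by move=> g'_en; rewrite -[in LHS]g'_en (mulKVmx (GL_unitmx g)).
Qed.

Definition lastblk_col (w : 'rV['F_2]_k'.+1) : 'cV['F_2]_n'.+1 :=
  \col_r (if (sumn tm <= r < sumn tm + k'.+1)%N then w 0 (inord (r - sumn tm))
          else (r == ord_max)%:R).

Lemma lastblk_col_inj : injective lastblk_col.
Proof.
move=> w1 w2 w12; apply/rowP => j.
have lt_tmj : (sumn tm + j < n'.+1)%N by have := ltn_ord j; lia.
have /colP/(_ (Ordinal lt_tmj)) := w12; rewrite !mxE /=.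
rewrite leq_addr ltn_add2l ltn_ord /= addKn.
by have -> : (inord j : 'I_k'.+1) = j by apply: val_inj; rewrite /= inordK.
Qed.

Lemma Pbar_col_max g : g \in Pbar n'.+1 lam mu ->
  GLval g *m en = lastblk_col (\row_j GLval g (inord (sumn tm + j)) ord_max).
Proof.
move=> g_P; apply/colP => r; rewrite -colE !mxE.
case: ifP => [/andP[le_tmr lt_r]|r_blk].
  have lt_rk : (r - sumn tm < k'.+1)%N by rewrite ltn_subLR.
  suff -> : inord (sumn tm + @inord k' (r - sumn tm)) = r :> 'I_n'.+1 by [].
  by apply: val_inj; rewrite /= (inordK lt_rk) subnKC ?inordK.
have [->|r_max] := eqVneq r ord_max; first exact: Pbar_last_diag g_P.
case/PbarP: g_P => _ g_mu; apply: g_mu.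
rewrite !blk_mu blk_tm_max blk_lt_size.
by move: r_blk r_max; rewrite -ltn_ord_max /=; lia.
Qed.

Lemma lastblk_col_transvection w :
  exists2 g, g \in Pbar n'.+1 lam mu & GLval g *m en = lastblk_col w.
Proof.
have diff_max : (lastblk_col w - en) ord_max 0 = 0.
  rewrite !mxE eqxx /=; case: ifP => [|_]; last exact: subrr.
  by move/andP=> [_]; lia.
have u_unit := transvection_unit diff_max.
pose u : {'GL_n'.+1['F_2]} := Sub (1%:M + (lastblk_col w - en) *m en^T) u_unit.
exists u; last first.
  apply/colP => r; rewrite -colE mxE /en transvectionE eqxx mul1r.
  by rewrite !mxE /= eqxx andbT addrCA subrr addr0.
apply/PbarP; split=> i j lt_ji; rewrite /= /en transvectionE.
  have j_max : j != ord_max.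
    apply: contraTneq lt_ji => ->; rewrite !blk_lam -leqNgt.
    by rewrite [blk tl (@ord_max n')]blk_ge ?tl_n' ?blk_le_size.
  have i_j : i != j by apply: contraTneq lt_ji => ->; rewrite ltnn.
  by rewrite (negbTE j_max) mul0r addr0 (negbTE i_j).
have j_i : j != i by apply: contraTneq lt_ji => ->; rewrite ltnn.
rewrite (negbTE j_i) add0r; have [i_max|] := eqVneq i ord_max; last by rewrite mul0r.
move: lt_ji; rewrite i_max !blk_mu blk_tm_max blk_lt_size => lt_j_tm.
by rewrite !mxE leqNgt lt_j_tm /= andbT mul1r subrr.
Qed.

Lemma orbit_en :
  orbit (GLcol_action _ _) (Pbar n'.+1 lam mu) en = lastblk_col @: setT.
Proof.
apply/setP => v; apply/orbitP/imsetP => [[g g_P <-]|[w _ ->]].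
  exists (\row_j GLval (g^-1)%g (inord (sumn tm + j)) ord_max) => //.
  by rewrite /= /GLcol_act Pbar_col_max ?groupV.
have [g g_P g_en] := lastblk_col_transvection w.
by exists (g^-1)%g; rewrite ?groupV // /= /GLcol_act invgK.
Qed.

Lemma index_Pbar_split_last :
  #|Pbar n'.+1 lam mu : Pbar n'.+1 lam mu'|%g = (2 ^ k'.+1)%N.
Proof.
rewrite Pbar_mu'_stab -card_orbit orbit_en (card_imset _ lastblk_col_inj).
by rewrite cardsT card_mx card_Fp // mul1n.
Qed.

End SplitLastBlock.

Theorem corollary2 (n : nat) (lam mu : seq nat) :
  decomposition lam n -> decomposition mu n ->
  last 0%N lam = 1%N -> (2 <= last 0%N mu)%N ->
  let mu' := rcons (rcons (take (size mu).-1 mu) (last 0%N mu).-1) 1%N in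
  #|Pbar n lam mu : Pbar n lam mu'|%g = (2 ^ (last 0%N mu).-1)%N.
Proof.
case/lastP: lam => [//|tl x]; case/lastP: mu => [//|tm y].
rewrite /decomposition !last_rcons !sumn_rcons size_rcons /=.
move=> /andP[_ /eqP tl_n] /andP[_ /eqP tm_n] x1; subst x.
rewrite -[in take _ _]cats1 take_size_cat //.
case: y tm_n => [|[|k']] // tm_n _; case: n tl_n tm_n => [|n'] tl_n tm_n.
  by rewrite addn1 in tl_n.
by apply: index_Pbar_split_last => //; lia.
Qed.
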